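(* Let $S'$ be a finite poset that has an induced sub-poset isomorphic or anti-isomorphic to one of the posets $S_1,\dots,S_5$ below. Then there exists a stochastically monotone generator on $S'$ which is not realizably monotone. $S_1=\{w,a,b,c,d\}$: $w<a$, $a<b<d$, $a<c<d$, $b,c$ incomparable. $S_2=\{a,b,c,w,d\}$: $a<b<d$, $a<c<d$, $a<w<d$, $b,c,w$ pairwise incomparable. $S_3=\{a,b,c,w,d\}$: $a<b<d$, $a<c<w<d$, $b$ incomparable to $c,w$. $S_4=\{a,b,c,d,w\}$ with strict relations exactly $a<w,a<c,a<d,w<c,b<c,b<d$. $S_5=\{a,b,c,d,w\}$: $a,b<c,d<w$, with $a,b$ incomparable and $c,d$ incomparable.
   Context: A generator on a finite poset $S$ is a matrix $L$ with $L_{x,y}\ge0$ for $x\ne y$ and rows summing to $0$; $L_{x,\Gamma}=\sum_{z\in\Gamma}L_{x,z}$. $L$ is stochastically monotone iff for every up-set $\Gamma$ and $x\le y\notin\Gamma$, $L_{x,\Gamma}\le L_{y,\Gamma}$, and for every down-set $\Gamma$ and $y\ge x\notin\Gamma$, $L_{x,\Gamma}\ge L_{y,\Gamma}$. $L$ is realizably monotone iff there exists $\Lambda:\mathcal M\to[0,\infty)$, $\mathcal M$ the set of increasing maps $S\to S$, with $L_{x,y}=\sum_{f\in\mathcal M:f(x)=y}\Lambda(f)$ for all $x\ne y$. An induced sub-poset is a subset with the restricted order. *)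

From HB Require Import structures.
From mathcomp Require Import all_boot all_order all_algebra.
Set Implicit Arguments. Unset Strict Implicit. Unset Printing Implicit Defensive.
Import Order.TTheory GRing.Theory Num.Theory.
Local Open Scope ring_scope.

Section Generators.
Variables (d : Order.disp_t) (T : finPOrderType d) (R : realFieldType).

Definition Lset (L : T -> T -> R) (x : T) (G : {set T}) : R :=
  \sum_(z in G) L x z.

Definition is_generator (L : T -> T -> R) : Prop :=
  (forall x y : T, x != y -> 0 <= L x y) /\
  (forall x : T, \sum_(z : T) L x z = 0).

Definition upset (G : {set T}) : Prop :=
  forall x y : T, x \in G -> (x <= y)%O -> y \in G.

Definition downset (G : {set T}) : Prop :=
  forall x y : T, x \in G -> (y <= x)%O -> y \in G.

Definition stoch_monotone (L : T -> T -> R) : Prop :=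
  (forall (G : {set T}) (x y : T), upset G -> (x <= y)%O -> y \notin G ->
      Lset L x G <= Lset L y G) /\
  (forall (G : {set T}) (x y : T), downset G -> (x <= y)%O -> x \notin G ->
      Lset L y G <= Lset L x G).

Definition increasing (f : {ffun T -> T}) : bool :=
  [forall x, forall y, (x <= y)%O ==> (f x <= f y)%O].

Definition realizably_monotone (L : T -> T -> R) : Prop :=
  exists Lam : {ffun T -> T} -> R,
    (forall f, increasing f -> 0 <= Lam f) /\
    (forall x y : T, x != y ->
       L x y = \sum_(f : {ffun T -> T} | increasing f && (f x == y)) Lam f).

End Generators.

(* The five posets S_1..S_5, on the carrier 'I_5; the order is given by the
   reflexive closure of an explicitly transitively closed list of strict
   relations (pairs of indices). *)
Definition le_of (s : seq (nat * nat)) (x y : 'I_5) : bool :=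
  (x == y) || ((nat_of_ord x, nat_of_ord y) \in s).

(* S1: w=0 a=1 b=2 c=3 d=4 ; w<a, a<b<d, a<c<d *)
Definition S1_rel := [:: (0,1); (0,2); (0,3); (0,4); (1,2); (1,3); (1,4); (2,4); (3,4)]%N.
(* S2: a=0 b=1 c=2 w=3 d=4 ; a<b<d, a<c<d, a<w<d *)
Definition S2_rel := [:: (0,1); (0,2); (0,3); (0,4); (1,4); (2,4); (3,4)]%N.
(* S3: a=0 b=1 c=2 w=3 d=4 ; a<b<d, a<c<w<d *)
Definition S3_rel := [:: (0,1); (0,2); (0,3); (0,4); (1,4); (2,3); (2,4); (3,4)]%N.
(* S4: a=0 b=1 c=2 d=3 w=4 ; a<w, a<c, a<d, w<c, b<c, b<d *)
Definition S4_rel := [:: (0,4); (0,2); (0,3); (4,2); (1,2); (1,3)]%N.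
(* S5: a=0 b=1 c=2 d=3 w=4 ; a,b < c,d < w *)
Definition S5_rel := [:: (0,2); (0,3); (1,2); (1,3); (2,4); (3,4); (0,4); (1,4)]%N.

Definition S_rel (k : nat) : seq (nat * nat) :=
  match k with
  | 1 => S1_rel | 2 => S2_rel | 3 => S3_rel | 4 => S4_rel | _ => S5_rel
  end%N.

Definition has_induced_iso d (T : finPOrderType d) (le : 'I_5 -> 'I_5 -> bool) : Prop :=
  exists g : 'I_5 -> T, injective g /\ forall x y, (g x <= g y)%O = le x y.

Definition has_induced_anti_iso d (T : finPOrderType d) (le : 'I_5 -> 'I_5 -> bool) : Prop :=
  exists g : 'I_5 -> T, injective g /\ forall x y, (g x <= g y)%O = le y x.

From HB Require Import structures.
From mathcomp Require Import all_boot all_order all_algebra.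
Import Order.TTheory GRing.Theory Num.Theory.
Set Implicit Arguments. Unset Strict Implicit. Unset Printing Implicit Defensive.

(* Non-realizability is witnessed by Farkas duality: if [Lam] realizes [L] and
   [c] vanishes on the diagonal, then [sum_(x,y) c x y * L x y] equals
   [sum_f Lam f * sum_x c x (f x)], so [L] is not realizably monotone when [c]
   pairs negatively with [L] but nonnegatively with every increasing map.
   Each pattern [S_k] carries a stochastically monotone generator with such a
   certificate.  On [S'] containing a copy of [S_k], every point jumps only into
   the copy, at rates depending only on its type: which copy points lie below it
   and which above.  A realizing measure then charges only increasing maps
   sending the copy into itself, so the certificate still applies, and
   stochastic monotonicity reduces to finitely many inequalities between types
   and traces of up- and down-sets on the copy.  These, and the certificate
   inequalities, are checked by computation.  The anti-isomorphic case is the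
   isomorphic case for the dual order, which has the same generators, monotone
   generators and increasing maps. *)

Section RealizingMeasures.
Local Open Scope ring_scope.
Variables (d : Order.disp_t) (T : finPOrderType d) (R : realFieldType).
Variables (L : T -> T -> R) (Lam : {ffun T -> T} -> R).
Hypothesis Lam_ge0 : forall f, increasing f -> 0 <= Lam f.
Hypothesis L_Lam : forall x y, x != y ->
  L x y = \sum_(f : {ffun T -> T} | increasing f && (f x == y)) Lam f.

Lemma increasing_le (f : {ffun T -> T}) x y :
  increasing f -> (x <= y)%O -> (f x <= f y)%O.
Proof. by move=> /forallP/(_ x)/forallP/(_ y)/implyP. Qed.

Lemma realizer_le_rate f x : increasing f -> f x != x -> Lam f <= L x (f x).
Proof.
move=> incf fx; rewrite L_Lam 1?eq_sym // (bigD1 f) ?incf ?eqxx //=.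
by rewrite lerDl sumr_ge0 // => f' /andP[/andP[/Lam_ge0]].
Qed.

Lemma realizer_pairing (I : finType) (g : I -> T) (c : I -> T -> R) :
  (forall i, c i (g i) = 0) ->
  \sum_i \sum_y c i y * L (g i) y =
  \sum_(f : {ffun T -> T} | increasing f) Lam f * \sum_i c i (f (g i)).
Proof.
move=> c_diag; under [RHS]eq_bigr do rewrite mulr_sumr.
rewrite [RHS]exchange_big; apply: eq_bigr => i _ /=.
rewrite (partition_big (fun f : {ffun T -> T} => f (g i)) predT) //=.
apply: eq_bigr => y _; case: (eqVneq y (g i)) => [->|ygi].
  by rewrite c_diag mul0r big1 // => f /andP[_ /eqP->]; rewrite c_diag mulr0.
rewrite L_Lam 1?eq_sym // mulr_sumr; apply: eq_bigr => f /andP[_ /eqP->].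
by rewrite mulrC.
Qed.

End RealizingMeasures.

Section DualOrder.
Local Open Scope ring_scope.
Variables (d : Order.disp_t) (T : finPOrderType d) (R : realFieldType).
Implicit Type L : T -> T -> R.

Lemma increasing_dual (f : {ffun T -> T}) :
  increasing (f : {ffun T^d -> T^d}) = increasing f.
Proof.
by apply/forallP/forallP => incf x; apply/forallP => y; apply/implyP => xy;
  move/forallP: (incf y) => /(_ x) /implyP; apply.
Qed.

Lemma stoch_monotone_dual L : stoch_monotone (T:=T^d) L -> stoch_monotone L.
Proof.
case=> up dn; split=> G x y GP xy nG.
- exact: dn G y x GP xy nG.
- exact: up G y x GP xy nG.
Qed.

Lemma realizably_monotone_dual L :
  realizably_monotone L -> realizably_monotone (T:=T^d) L.
Proof.
case=> Lam [Lam_ge0 L_Lam]; exists Lam; split=> [f|x y xy].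
  by rewrite increasing_dual; apply: Lam_ge0.
by rewrite L_Lam //; apply: eq_bigl => f; rewrite increasing_dual.
Qed.

Lemma counterexample_dual :
  (exists L : T^d -> T^d -> R,
     is_generator L /\ stoch_monotone L /\ ~ realizably_monotone L) ->
  exists L : T -> T -> R,
    is_generator L /\ stoch_monotone L /\ ~ realizably_monotone L.
Proof.
case=> L [gen [mono not_real]]; exists L; split=> //; split.
  exact: stoch_monotone_dual.
by move/realizably_monotone_dual.
Qed.

End DualOrder.

Definition pset := (bool * bool * bool * bool * bool)%type.

Definition pmem (V : pset) (i : nat) : bool :=
  let '(b0, b1, b2, b3, b4) := V in
  match i with 0 => b0 | 1 => b1 | 2 => b2 | 3 => b3 | _ => b4 end.
Arguments pmem : simpl never.

Definition pset_of (P : nat -> bool) : pset := (P 0, P 1, P 2, P 3, P 4).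

Definition pmask (m : nat) : pset := pset_of (fun i => odd (m %/ 2 ^ i)).

Definition psets : seq pset := map pmask (iota 0 32).

Definition points : seq nat := iota 0 5.

Definition ple (s : seq (nat * nat)) (i j : nat) : bool := (i == j) || ((i, j) \in s).

Definition upward s (V : pset) : bool :=
  all (fun i => all (fun j => pmem V i && ple s i j ==> pmem V j) points) points.

Definition downward s (V : pset) : bool :=
  all (fun i => all (fun j => pmem V j && ple s i j ==> pmem V i) points) points.

Definition pdisjoint (V W : pset) : bool := all (fun i => ~~ (pmem V i && pmem W i)) points.

Definition psubset (V W : pset) : bool := all (fun i => pmem V i ==> pmem W i) points.

Definition point_type s (i : nat) : pset * pset := (pset_of (ple s ^~ i), pset_of (ple s i)).

(* Necessary conditions on the type [(D, U)] of a point of [S']; when [D] and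
   [U] meet, the point belongs to the copy. *)
Definition valid_type s (t : pset * pset) : bool :=
  [&& downward s t.1, upward s t.2,
      all (fun i => all (fun j => pmem t.1 i && pmem t.2 j ==> ple s i j) points) points &
      pdisjoint t.1 t.2 || has (fun i => t == point_type s i) points].

Definition valid_types s : seq (pset * pset) :=
  [seq t <- [seq (D, U) | D <- psets, U <- psets] | valid_type s t].

Definition type_le (t1 t2 : pset * pset) : bool := psubset t1.1 t2.1 && psubset t2.2 t1.2.

(* An entry [(D, U, r)] gives the rates [r] towards the pattern points of the
   type whose components have bitmasks [D] and [U] (bit [i] for point [i]);
   points of unlisted types do not move. *)
Definition rate_table := seq (nat * nat * seq nat).

Definition rates (tbl : rate_table) (t : pset * pset) : seq nat :=
  head [::] [seq e.2 | e <- tbl & (pmask e.1.1, pmask e.1.2) == t].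

Definition mass (r : seq nat) (V : pset) : nat :=
  foldr (fun i m => (if pmem V i then nth 0 r i else 0) + m) 0 points.

Definition monotone_rates (trs : seq ((pset * pset) * seq nat)) (ups downs : seq pset) :=
  all (fun tr1 => all (fun tr2 => type_le tr1.1 tr2.1 ==>
    all (fun V => pdisjoint V tr2.1.1 ==> (mass tr1.2 V <= mass tr2.2 V)) ups &&
    all (fun V => pdisjoint V tr1.1.2 ==> (mass tr2.2 V <= mass tr1.2 V)) downs) trs) trs.

Definition monotone_check s (tbl : rate_table) : bool :=
  monotone_rates [seq (t, rates tbl t) | t <- valid_types s]
    [seq V <- psets | upward s V] [seq V <- psets | downward s V].

Definition coef (c : seq (seq int)) (i j : nat) : int := nth 0%R (nth [::] c i) j.

Fixpoint point_seqs (n : nat) : seq (seq nat) :=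
  if n is n'.+1 then flatten [seq [seq i :: v | v <- point_seqs n'] | i <- points]
  else [:: [::]].

Definition monotone_seq s (v : seq nat) : bool :=
  all (fun i => all (fun j => ple s i j ==> ple s (nth 0 v i) (nth 0 v j)) points) points.

Definition map_pairing (c : seq (seq int)) (v : seq nat) : int :=
  foldr (fun i m => coef c i (nth 0 v i) + m)%R 0%R points.

Definition pairing_check s (c : seq (seq int)) : bool :=
  all (fun v => monotone_seq s v ==> (0 <= map_pairing c v)%R) (point_seqs 5).

Definition rate_pairing s (tbl : rate_table) (c : seq (seq int)) : int :=
  foldr (fun i m => foldr (fun j m' =>
    coef c i j * (nth 0 (rates tbl (point_type s i)) j)%:Z + m') 0 points + m)%R 0%R points.

Definition certificate s (tbl : rate_table) (c : seq (seq int)) : Prop :=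
  [/\ monotone_check s tbl, all (fun i => coef c i i == 0%R) points,
      pairing_check s c & (rate_pairing s tbl c < 0)%R].

Lemma all_pointsP (P : pred nat) : reflect (forall a : 'I_5, P a) (all P points).
Proof.
apply: (iffP allP) => [allP a | allP i]; first by apply: allP; rewrite mem_iota ltn_ord.
by rewrite mem_iota => /andP[_ lt_i5]; exact: allP (Ordinal lt_i5).
Qed.

Lemma pmem_of P (a : 'I_5) : pmem (pset_of P) a = P a.
Proof. by case: a => [[|[|[|[|[|]]]]]]. Qed.

Lemma eq_pset_of (P Q : nat -> bool) :
  (forall a : 'I_5, P a = Q a) -> pset_of P = pset_of Q.
Proof.
by move=> PQ; rewrite /pset_of !(PQ (Ordinal (isT : 0 < 5)), PQ (Ordinal (isT : 1 < 5)),
  PQ (Ordinal (isT : 2 < 5)), PQ (Ordinal (isT : 3 < 5)), PQ (Ordinal (isT : 4 < 5))).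
Qed.

Lemma psets_all V : V \in psets.
Proof. by case: V => [[[[[] []] []] []] []]; vm_compute. Qed.

Lemma monotone_checkP s tbl t1 t2 V :
  monotone_check s tbl -> t1 \in valid_types s -> t2 \in valid_types s -> type_le t1 t2 ->
  (upward s V -> pdisjoint V t2.1 -> mass (rates tbl t1) V <= mass (rates tbl t2) V) /\
  (downward s V -> pdisjoint V t1.2 -> mass (rates tbl t2) V <= mass (rates tbl t1) V).
Proof.
rewrite /monotone_check /monotone_rates => mono t1_in t2_in le12.
have tr_in t : t \in valid_types s ->
    (t, rates tbl t) \in [seq (t, rates tbl t) | t <- valid_types s].
  exact: map_f.
have := allP (allP mono _ (tr_in _ t1_in)) _ (tr_in _ t2_in).
move=> /implyP/(_ le12)/andP[/allP up /allP dn].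
split=> [Vup | Vdn]; apply/implyP; [apply: up | apply: dn];
  by rewrite mem_filter ?Vup ?Vdn psets_all.
Qed.

Lemma point_seqs_all (v : seq nat) : all (gtn 5) v -> v \in point_seqs (size v).
Proof.
elim: v => [//|i v IHv] /andP[lt_i5 /IHv v_in].
by apply/flatten_mapP; exists i; rewrite ?mem_iota ?map_f.
Qed.

Local Open Scope ring_scope.

Lemma sum_points (V : nmodType) (F : nat -> V) :
  \sum_(a < 5) F a = foldr (fun i m => F i + m) 0 points.
Proof. by rewrite -(big_mkord xpredT F) /index_iota /= !big_cons big_nil. Qed.

Lemma sum_points2 (V : nmodType) (F : nat -> nat -> V) :
  \sum_(a < 5) \sum_(b < 5) F a b =
  foldr (fun i m => foldr (fun j m' => F i j + m') 0 points + m) 0 points.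
Proof. by rewrite (sum_points (fun i => \sum_(b < 5) F i b)) /= !sum_points. Qed.

Lemma natr_mass (R : pzSemiRingType) (r : seq nat) V :
  (mass r V)%:R = \sum_(a < 5) (if pmem V a then (nth 0%N r a)%:R else 0) :> R.
Proof.
rewrite (sum_points (fun i => if pmem V i then (nth 0%N r i)%:R else 0)) /mass /=.
by rewrite !natrD !(fun_if (GRing.natmul 1)).
Qed.

Lemma map_pairing_ge0 s (c : seq (seq int)) (h : 'I_5 -> 'I_5) :
  pairing_check s c -> {homo h : a b / le_of s a b} ->
  0 <= \sum_(a < 5) coef c a (h a).
Proof.
move=> check h_mono; pose v := [seq val (h (inord i)) | i <- points].
have v_nth (a : 'I_5) : nth 0%N v a = h a.
  by rewrite (nth_map 0%N) ?size_iota // nth_iota // add0n inord_val.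
have v_in : v \in point_seqs 5.
  have -> : 5%N = size v by rewrite size_map size_iota.
  by apply: point_seqs_all; apply/allP => _ /mapP[i _ ->]; exact: ltn_ord.
have v_mono : monotone_seq s v.
  apply/all_pointsP => a; apply/all_pointsP => b; rewrite !v_nth.
  by apply/implyP => /h_mono.
have := implyP (allP check v v_in) v_mono.
rewrite /map_pairing -(sum_points (fun i => coef c i (nth 0%N v i))).
by under eq_bigr do rewrite v_nth.
Qed.

Section Extension.
Variables (R : realFieldType) (d : Order.disp_t) (T : finPOrderType d).
Variables (s : seq (nat * nat)) (tbl : rate_table) (c : seq (seq int)).
Hypothesis cert : certificate s tbl c.
Variable g : 'I_5 -> T.
Hypothesis g_inj : injective g.
Hypothesis g_le : forall a b, (g a <= g b)%O = le_of s a b.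

Lemma ple_g (a b : 'I_5) : ple s a b = (g a <= g b)%O.
Proof. by rewrite g_le. Qed.

Definition trace (P : pred T) : pset := pset_of (fun i => P (g (inord i))).

Lemma pmem_trace P (a : 'I_5) : pmem (trace P) a = P (g a).
Proof. by rewrite pmem_of inord_val. Qed.

Definition type_of (x : T) : pset * pset :=
  (trace (fun y => y <= x)%O, trace (fun y => x <= y)%O).

Lemma type_of_g a : type_of (g a) = point_type s a.
Proof. by congr pair; apply: eq_pset_of => b; rewrite inord_val ple_g. Qed.

Lemma type_of_valid x : type_of x \in valid_types s.
Proof.
rewrite mem_filter allpairs_f ?psets_all // andbT.
apply/and4P; split.
- apply/all_pointsP => a; apply/all_pointsP => b /=; rewrite !pmem_trace ple_g.
  by apply/implyP => /andP[bx ab]; exact: le_trans ab bx.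
- apply/all_pointsP => a; apply/all_pointsP => b /=; rewrite !pmem_trace ple_g.
  by apply/implyP => /andP[xa ab]; exact: le_trans xa ab.
- apply/all_pointsP => a; apply/all_pointsP => b /=; rewrite !pmem_trace ple_g.
  by apply/implyP => /andP[ax xb]; exact: le_trans ax xb.
case: (pickP (fun a => (g a <= x) && (x <= g a))%O) => [a /andP[ax xa] | none].
  apply/orP; right; apply/hasP; exists (val a); first by rewrite mem_iota ltn_ord.
  have -> : x = g a by apply: le_anti; rewrite xa ax.
  by rewrite type_of_g.
apply/orP; left; apply/all_pointsP => a /=.
by rewrite !pmem_trace none.
Qed.

Lemma type_of_le x y : (x <= y)%O -> type_le (type_of x) (type_of y).
Proof.
move=> xy; apply/andP; split; apply/all_pointsP => a; rewrite /= !pmem_trace.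
  by apply/implyP => ax; exact: le_trans ax xy.
by apply/implyP => ya; exact: le_trans xy ya.
Qed.

Definition rate (x : T) (a : 'I_5) : nat := nth 0%N (rates tbl (type_of x)) a.

Definition jump (x z : T) : R := \sum_(a | g a == z) (rate x a)%:R.

Definition extension (x z : T) : R :=
  if z == x then - \sum_(w | w != x) jump x w else jump x z.

Lemma extension_generator : is_generator extension.
Proof.
split=> [x y xy | x].
  by rewrite /extension eq_sym (negbTE xy) sumr_ge0.
rewrite (bigD1 x) //= /extension eqxx addrC.
by under eq_bigr => z /negbTE zx do rewrite zx; rewrite addrN.
Qed.

Lemma extension_g (a b : 'I_5) : a != b ->
  extension (g a) (g b) = (nth 0%N (rates tbl (point_type s a)) b)%:R.
Proof.
move=> ab; rewrite /extension (inj_eq g_inj) eq_sym (negbTE ab) /jump.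
by rewrite (big_pred1 b) => [|b'] /=; rewrite ?(inj_eq g_inj) // /rate type_of_g.
Qed.

Lemma extension_off x z : z != x -> (forall a, g a != z) -> extension x z = 0.
Proof. by move=> zx off; rewrite /extension (negbTE zx) /jump big_pred0 // => a; exact: negbTE. Qed.

Lemma Lset_extension x (G : {set T}) : x \notin G ->
  Lset extension x G = (mass (rates tbl (type_of x)) (trace (fun y => y \in G)))%:R.
Proof.
move=> xG; rewrite natr_mass /Lset.
transitivity (\sum_(z in G) jump x z).
  apply: eq_bigr => z zG; rewrite /extension; case: eqP => // zx.
  by move: xG; rewrite -zx zG.
rewrite -big_mkcond (partition_big g (mem G)) => [|a]; last by rewrite pmem_trace.
apply: eq_bigr => z zG; apply: eq_bigl => a.
by rewrite pmem_trace; case: eqP => [->|_]; rewrite ?zG ?andbF.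
Qed.

Lemma mass_monotone x y V : (x <= y)%O ->
  (upward s V -> pdisjoint V (type_of y).1 ->
     mass (rates tbl (type_of x)) V <= mass (rates tbl (type_of y)) V)%N /\
  (downward s V -> pdisjoint V (type_of x).2 ->
     mass (rates tbl (type_of y)) V <= mass (rates tbl (type_of x)) V)%N.
Proof.
move=> xy; case: cert => mono _ _ _.
exact: monotone_checkP mono (type_of_valid x) (type_of_valid y) (type_of_le xy).
Qed.

Lemma trace_upward (G : {set T}) : upset G -> upward s (trace (fun y => y \in G)).
Proof.
move=> Gup; apply/all_pointsP => a; apply/all_pointsP => b /=.
by rewrite !pmem_trace ple_g; apply/implyP => /andP[aG ab]; exact: Gup aG ab.
Qed.

Lemma trace_downward (G : {set T}) : downset G -> downward s (trace (fun y => y \in G)).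
Proof.
move=> Gdn; apply/all_pointsP => a; apply/all_pointsP => b /=.
by rewrite !pmem_trace ple_g; apply/implyP => /andP[bG ab]; exact: Gdn bG ab.
Qed.

Lemma trace_disjoint_below (G : {set T}) x : upset G -> x \notin G ->
  pdisjoint (trace (fun y => y \in G)) (type_of x).1.
Proof.
move=> Gup xG; apply/all_pointsP => a /=; rewrite !pmem_trace.
by apply: contra xG => /andP[aG ax]; exact: Gup aG ax.
Qed.

Lemma trace_disjoint_above (G : {set T}) x : downset G -> x \notin G ->
  pdisjoint (trace (fun y => y \in G)) (type_of x).2.
Proof.
move=> Gdn xG; apply/all_pointsP => a /=; rewrite !pmem_trace.
by apply: contra xG => /andP[aG xa]; exact: Gdn aG xa.
Qed.

Lemma extension_stoch_monotone : stoch_monotone extension.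
Proof.
split=> G x y GP xy nG.
- have xG : x \notin G by apply: contra nG => xG; exact: GP x y xG xy.
  rewrite !Lset_extension // ler_nat.
  by apply: (mass_monotone _ xy).1; [exact: trace_upward | exact: trace_disjoint_below].
- have yG : y \notin G by apply: contra nG => yG; exact: GP y x yG xy.
  rewrite !Lset_extension // ler_nat.
  by apply: (mass_monotone _ xy).2; [exact: trace_downward | exact: trace_disjoint_above].
Qed.

Definition weight (a : 'I_5) (z : T) : R := \sum_(b | g b == z) (coef c a b)%:~R.

Lemma weight_g a b : weight a (g b) = (coef c a b)%:~R.
Proof. by rewrite /weight (big_pred1 b) // => b'; rewrite /= (inj_eq g_inj). Qed.

Lemma coef_diag (a : 'I_5) : coef c a a = 0.
Proof. by case: cert => _ /all_pointsP /(_ a) /eqP. Qed.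

Lemma weight_diag a : weight a (g a) = 0.
Proof. by rewrite weight_g coef_diag. Qed.

Lemma weighted_extension :
  \sum_a \sum_z weight a z * extension (g a) z = (rate_pairing s tbl c)%:~R.
Proof.
have -> : rate_pairing s tbl c = \sum_(a < 5) \sum_(b < 5)
    coef c a b * (nth 0%N (rates tbl (point_type s a)) b)%:Z.
  by rewrite (sum_points2 (fun i j => coef c i j * (nth 0%N (rates tbl (point_type s i)) j)%:Z)).
rewrite rmorph_sum; apply: eq_bigr => a _; rewrite rmorph_sum /=.
transitivity (\sum_(b : 'I_5) (coef c a b)%:~R * extension (g a) (g b)).
  rewrite [RHS](partition_big g predT) //; apply: eq_bigr => z _.
  by rewrite mulr_suml; apply: eq_bigr => b /eqP <-.
apply: eq_bigr => b _; case: (eqVneq a b) => [<-|ab].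
  by rewrite coef_diag mul0r.
by rewrite extension_g // intrM.
Qed.

Section Realizer.
Variable Lam : {ffun T -> T} -> R.
Hypothesis Lam_ge0 : forall f, increasing f -> 0 <= Lam f.
Hypothesis L_Lam : forall x y, x != y ->
  extension x y = \sum_(f : {ffun T -> T} | increasing f && (f x == y)) Lam f.

Lemma realizer_maps_copy f :
  increasing f -> Lam f != 0 -> forall a, exists b, f (g a) = g b.
Proof.
move=> incf Lf_neq0 a.
case: (pickP (fun b => f (g a) == g b)) => [b /eqP|off]; first by exists b.
have fga : f (g a) != g a by rewrite off.
have := realizer_le_rate Lam_ge0 L_Lam incf fga.
rewrite extension_off // => [Lf_le0|b]; last by rewrite eq_sym off.
by move: Lf_neq0; rewrite eq_le Lf_le0 Lam_ge0.
Qed.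

Lemma realizer_weight_ge0 f : increasing f -> 0 <= Lam f * \sum_a weight a (f (g a)).
Proof.
move=> incf; have [->|Lf_neq0] := eqVneq (Lam f) 0; first by rewrite mul0r.
rewrite mulr_ge0 ?Lam_ge0 //.
have [h fgh] := fin_all_exists (realizer_maps_copy incf Lf_neq0).
under eq_bigr do rewrite fgh weight_g.
rewrite -rmorph_sum ler0z; case: cert => _ _ check _.
apply: map_pairing_ge0 check _ => a b ab.
by rewrite -g_le -!fgh increasing_le // g_le.
Qed.

End Realizer.

Lemma extension_not_realizable : ~ realizably_monotone extension.
Proof.
case=> Lam [Lam_ge0 L_Lam].
have := realizer_pairing L_Lam weight_diag.
rewrite weighted_extension => pairing_eq.
case: cert => _ _ _; rewrite -(ltrz0 R) pairing_eq ltNge.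
by rewrite sumr_ge0 // => f; exact: realizer_weight_ge0.
Qed.

Lemma extension_counterexample :
  exists L : T -> T -> R,
    is_generator L /\ stoch_monotone L /\ ~ realizably_monotone L.
Proof.
exists extension; split; first exact: extension_generator.
by split; [exact: extension_stoch_monotone | exact: extension_not_realizable].
Qed.

End Extension.

Definition S1_rates : rate_table :=
  [:: (0, 0, [:: 1; 0; 1; 0; 1]); (0, 16, [:: 1; 0; 1; 0; 1]); (0, 20, [:: 1; 0; 1; 0; 0]);
      (0, 24, [:: 1; 0; 1; 0; 0]); (0, 28, [:: 1; 0; 1; 0; 0]); (0, 30, [:: 1; 0; 0; 0; 0]);
      (1, 0, [:: 0; 0; 1; 0; 1]); (1, 16, [:: 1; 0; 1; 0; 1]); (1, 20, [:: 1; 0; 0; 0; 1]);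
      (1, 24, [:: 1; 0; 1; 0; 0]); (1, 28, [:: 1; 0; 1; 0; 0]); (1, 30, [:: 1; 0; 1; 0; 0]);
      (3, 0, [:: 0; 0; 1; 0; 1]); (3, 16, [:: 1; 0; 1; 0; 1]); (3, 20, [:: 1; 0; 0; 0; 1]);
      (3, 24, [:: 1; 0; 1; 0; 0]); (3, 28, [:: 1; 0; 1; 0; 0]); (3, 30, [:: 1; 0; 1; 0; 0]);
      (7, 0, [:: 0; 0; 0; 0; 1]); (7, 16, [:: 0; 1; 1; 0; 1]); (7, 20, [:: 1; 0; 0; 0; 1]);
      (11, 0, [:: 0; 0; 1; 0; 1]); (11, 16, [:: 0; 0; 1; 1; 1]); (11, 24, [:: 1; 0; 0; 0; 1]);
      (15, 0, [:: 0; 0; 0; 0; 1]); (15, 16, [:: 0; 0; 1; 1; 1]); (31, 16, [:: 0; 0; 1; 1; 0])]%N.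

Definition S1_dual : seq (seq int) :=
  [:: [:: 0; 1; 1; -1; 1]; [:: 1; 0; 0; 1; 1]; [:: 0; 1; 0; 1; 0];
      [:: 0; 1; 1; 0; 0]; [:: 1; 1; -1; -1; 0]]%R.

Definition S2_rates : rate_table :=
  [:: (0, 0, [:: 1; 0; 0; 1; 1]); (0, 16, [:: 1; 0; 0; 1; 1]); (0, 18, [:: 1; 0; 0; 1; 0]);
      (0, 20, [:: 1; 0; 0; 1; 0]); (0, 22, [:: 1; 0; 0; 1; 0]); (0, 24, [:: 1; 0; 0; 0; 0]);
      (0, 26, [:: 1; 0; 0; 0; 0]); (0, 28, [:: 1; 0; 0; 0; 0]); (0, 30, [:: 1; 0; 0; 0; 0]);
      (1, 0, [:: 1; 0; 0; 1; 1]); (1, 16, [:: 1; 0; 0; 1; 1]); (1, 18, [:: 1; 0; 0; 1; 0]);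
      (1, 20, [:: 1; 0; 0; 1; 0]); (1, 22, [:: 1; 0; 0; 1; 0]); (1, 24, [:: 1; 0; 0; 1; 0]);
      (1, 26, [:: 1; 0; 0; 1; 0]); (1, 28, [:: 1; 0; 0; 1; 0]); (1, 30, [:: 1; 0; 0; 1; 0]);
      (1, 31, [:: 0; 0; 0; 1; 0]); (3, 0, [:: 0; 0; 1; 1; 1]); (3, 16, [:: 1; 0; 0; 1; 1]);
      (3, 18, [:: 1; 0; 0; 1; 0]); (5, 0, [:: 0; 0; 1; 1; 1]); (5, 16, [:: 0; 0; 1; 1; 1]);
      (5, 20, [:: 1; 0; 0; 0; 1]); (7, 0, [:: 0; 0; 1; 1; 1]); (7, 16, [:: 0; 0; 1; 1; 1]);
      (9, 0, [:: 0; 0; 1; 1; 1]); (9, 16, [:: 0; 0; 1; 1; 1]); (9, 24, [:: 1; 0; 0; 0; 0]);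
      (11, 0, [:: 0; 0; 1; 1; 1]); (11, 16, [:: 0; 0; 1; 1; 1]); (13, 0, [:: 0; 0; 1; 1; 1]);
      (13, 16, [:: 0; 0; 1; 1; 1]); (15, 0, [:: 0; 0; 1; 1; 1]); (15, 16, [:: 0; 0; 1; 1; 1]);
      (31, 16, [:: 0; 0; 1; 1; 0])]%N.

Definition S2_dual : seq (seq int) :=
  [:: [:: 0; 0; 0; -1; 0]; [:: 1; 0; 1; 1; 1]; [:: 0; 0; 0; 1; 0];
      [:: 0; 0; 0; 0; 0]; [:: -1; 0; -1; -1; 0]]%R.

Definition S3_rates : rate_table :=
  [:: (0, 0, [:: 1; 0; 1; 0; 1]); (0, 16, [:: 1; 1; 1; 0; 0]); (0, 18, [:: 1; 1; 1; 0; 0]);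
      (0, 24, [:: 1; 1; 1; 0; 0]); (0, 26, [:: 1; 1; 1; 0; 0]); (0, 28, [:: 1; 1; 0; 0; 0]);
      (0, 30, [:: 1; 0; 0; 0; 0]); (1, 0, [:: 0; 1; 1; 0; 1]); (1, 16, [:: 1; 1; 1; 0; 1]);
      (1, 18, [:: 1; 1; 1; 0; 1]); (1, 24, [:: 1; 1; 1; 0; 1]); (1, 26, [:: 1; 1; 1; 0; 1]);
      (1, 28, [:: 1; 1; 1; 0; 1]); (1, 30, [:: 1; 1; 1; 0; 1]); (1, 31, [:: 0; 1; 2; 0; 0]);
      (3, 0, [:: 0; 1; 1; 0; 1]); (3, 16, [:: 0; 1; 1; 0; 1]); (3, 18, [:: 0; 0; 1; 0; 1]);
      (5, 0, [:: 0; 1; 1; 0; 1]); (5, 16, [:: 1; 1; 0; 0; 1]); (5, 24, [:: 1; 1; 0; 0; 1]);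
      (5, 28, [:: 1; 1; 0; 0; 1]); (7, 0, [:: 0; 1; 1; 0; 1]); (7, 16, [:: 0; 1; 1; 0; 1]);
      (13, 0, [:: 0; 1; 1; 0; 1]); (13, 16, [:: 1; 1; 0; 0; 1]); (13, 24, [:: 1; 1; 0; 0; 1]);
      (15, 0, [:: 0; 1; 1; 0; 1]); (15, 16, [:: 0; 1; 1; 0; 1]); (31, 16, [:: 0; 1; 1; 0; 0])]%N.

Definition S3_dual : seq (seq int) :=
  [:: [:: 0; 0; -1; 0; 0]; [:: 1; 0; 1; 1; 1]; [:: 0; 0; 0; 0; 0];
      [:: 0; 0; 1; 0; 0]; [:: -1; 0; -1; 0; 0]]%R.

Definition S4_rates : rate_table :=
  [:: (0, 0, [:: 0; 1; 0; 1; 1]); (0, 4, [:: 0; 1; 0; 1; 1]); (0, 8, [:: 0; 1; 0; 0; 1]);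
      (0, 12, [:: 0; 1; 0; 0; 1]); (0, 14, [:: 0; 0; 0; 0; 1]); (0, 20, [:: 1; 1; 0; 0; 0]);
      (0, 28, [:: 1; 1; 0; 0; 0]); (0, 29, [:: 0; 1; 0; 0; 0]); (0, 30, [:: 1; 0; 0; 0; 0]);
      (1, 0, [:: 0; 1; 0; 1; 1]); (1, 4, [:: 0; 1; 0; 1; 1]); (1, 8, [:: 0; 1; 0; 0; 1]);
      (1, 12, [:: 0; 1; 0; 0; 1]); (1, 20, [:: 1; 1; 0; 0; 1]); (1, 28, [:: 1; 1; 0; 0; 0]);
      (1, 29, [:: 0; 1; 0; 0; 0]); (2, 0, [:: 0; 1; 0; 1; 1]); (2, 4, [:: 0; 1; 0; 1; 1]);
      (2, 8, [:: 0; 1; 0; 1; 1]); (2, 12, [:: 0; 1; 0; 1; 1]); (2, 14, [:: 0; 0; 0; 1; 1]);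
      (3, 0, [:: 0; 1; 0; 1; 1]); (3, 4, [:: 0; 1; 0; 1; 1]); (3, 8, [:: 0; 1; 0; 1; 1]);
      (3, 12, [:: 0; 1; 0; 1; 1]); (11, 0, [:: 0; 0; 1; 0; 0]); (11, 8, [:: 0; 1; 0; 0; 1]);
      (17, 0, [:: 0; 0; 1; 1; 1]); (17, 4, [:: 0; 0; 1; 1; 1]); (17, 20, [:: 0; 1; 0; 0; 0]);
      (19, 0, [:: 0; 0; 1; 1; 1]); (19, 4, [:: 0; 0; 1; 1; 1]); (23, 0, [:: 0; 0; 0; 1; 0]);
      (23, 4, [:: 0; 0; 0; 1; 0]); (27, 0, [:: 0; 0; 1; 0; 0])]%N.

Definition S4_dual : seq (seq int) :=
  [:: [:: 0; 1; 0; 0; 0]; [:: 0; 0; 0; -1; 0]; [:: 0; 0; 0; 0; 0];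
      [:: 0; -1; 0; 0; 0]; [:: 1; 0; 0; 1; 0]]%R.

Definition S5_rates : rate_table :=
  [:: (0, 0, [:: 0; 1; 1; 1; 1]); (0, 16, [:: 0; 1; 1; 1; 1]); (0, 20, [:: 0; 1; 2; 1; 0]);
      (0, 24, [:: 0; 1; 1; 2; 0]); (0, 28, [:: 0; 1; 1; 0; 0]); (0, 29, [:: 0; 1; 1; 0; 0]);
      (0, 30, [:: 0; 0; 1; 0; 0]); (1, 0, [:: 0; 1; 1; 1; 1]); (1, 16, [:: 0; 1; 1; 1; 1]);
      (1, 20, [:: 0; 1; 2; 1; 0]); (1, 24, [:: 0; 1; 1; 2; 0]); (1, 28, [:: 0; 1; 1; 0; 0]);
      (1, 29, [:: 0; 1; 1; 0; 0]); (2, 0, [:: 0; 1; 1; 1; 1]); (2, 16, [:: 0; 1; 1; 1; 1]);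
      (2, 20, [:: 0; 1; 2; 1; 0]); (2, 24, [:: 0; 1; 1; 2; 0]); (2, 28, [:: 0; 1; 1; 0; 0]);
      (2, 30, [:: 0; 0; 1; 0; 0]); (3, 0, [:: 0; 0; 1; 1; 2]); (3, 16, [:: 0; 0; 1; 1; 1]);
      (3, 20, [:: 0; 1; 2; 1; 0]); (3, 24, [:: 0; 1; 1; 2; 0]); (3, 28, [:: 0; 1; 1; 0; 0]);
      (7, 0, [:: 0; 0; 1; 1; 2]); (7, 16, [:: 0; 0; 1; 1; 2]); (7, 20, [:: 0; 1; 0; 0; 1]);
      (11, 0, [:: 0; 0; 1; 1; 2]); (11, 16, [:: 0; 0; 1; 1; 1]); (11, 24, [:: 0; 1; 0; 0; 1]);
      (15, 0, [:: 0; 0; 1; 1; 2]); (15, 16, [:: 0; 0; 1; 1; 2]); (31, 16, [:: 0; 0; 1; 1; 0])]%N.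

Definition S5_dual : seq (seq int) :=
  [:: [:: 0; 1; 0; 0; 0]; [:: 0; 0; 0; 0; 0]; [:: 1; 0; 0; 1; 0];
      [:: 1; 0; 1; 0; 0]; [:: 0; -1; -1; -1; 0]]%R.

Definition pattern_rates (k : nat) : rate_table :=
  match k with 1 => S1_rates | 2 => S2_rates | 3 => S3_rates | 4 => S4_rates | _ => S5_rates end%N.

Definition pattern_dual (k : nat) : seq (seq int) :=
  match k with 1 => S1_dual | 2 => S2_dual | 3 => S3_dual | 4 => S4_dual | _ => S5_dual end%N.

Lemma pattern_certificate k : (1 <= k <= 5)%N ->
  certificate (S_rel k) (pattern_rates k) (pattern_dual k).
Proof. by case: k => [|[|[|[|[|[|k]]]]]] // _; split; vm_compute. Qed.

Theorem proposition4p2 (R : realFieldType) (d : Order.disp_t) (T : finPOrderType d) :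
  (exists2 k : nat, (1 <= k <= 5)%N &
     has_induced_iso T (le_of (S_rel k)) \/ has_induced_anti_iso T (le_of (S_rel k))) ->
  exists L : T -> T -> R,
    is_generator L /\ stoch_monotone L /\ ~ realizably_monotone L.
Proof.
case=> k /pattern_certificate cert [[g [g_inj g_le]] | [g [g_inj g_le]]].
  exact: (extension_counterexample R cert g_inj g_le).
apply: counterexample_dual.
exact: (extension_counterexample R (T := T^d) cert g_inj (fun a b => g_le b a)).
Qed.
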